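(* Let $A,B$ be an LR pair on $V$. Then there exists a unique $\mathbb F$-algebra antiautomorphism $\dagger$ of $\mathrm{End}(V)$ such that $A^\dagger=B$ and $B^\dagger=A$. Moreover $(X^\dagger)^\dagger=X$ for all $X\in\mathrm{End}(V)$.
   Context: Let $V$ be a vector space over a field $\mathbb F$ with $\dim V=d+1$. A decomposition of $V$ is a sequence $(V_i)_{i=0}^d$ of one-dimensional subspaces with $V=\bigoplus_{i=0}^d V_i$. An element $X\in\mathrm{End}(V)$ lowers the decomposition if $XV_i=V_{i-1}$ for $1\le i\le d$ and $XV_0=0$; it raises it if $XV_i=V_{i+1}$ for $0\le i\le d-1$ and $XV_d=0$. An ordered pair $A,B\in\mathrm{End}(V)$ is an LR pair on $V$ if some decomposition of $V$ is lowered by $A$ and raised by $B$. An antiautomorphism of $\mathrm{End}(V)$ is an $\mathbb F$-linear bijection $\sigma$ with $(XY)^\sigma=Y^\sigma X^\sigma$. *)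

(* V an abstract finite-dimensional vector space (vectType),
   End(V) = 'End(V) with composition (f \o g)%VF. *)
From HB Require Import structures.
From mathcomp Require Import all_boot all_order all_algebra.
Set Implicit Arguments. Unset Strict Implicit. Unset Printing Implicit Defensive.
Import GRing.Theory.
Local Open Scope ring_scope.

(* A decomposition (V_i)_{i=0}^d of V (dim V = d+1): one-dimensional subspaces
   whose sum is direct and equal to V.  Only indices 0..d are used. *)
Definition decomposition (F : fieldType) (V : vectType F) (d : nat)
    (Vs : nat -> {vspace V}) : Prop :=
  (forall i, (i <= d)%N -> \dim (Vs i) = 1%N) /\
  directv (\sum_(i < d.+1) Vs i)%VS /\
  (\sum_(i < d.+1) Vs i)%VS = fullv.

Definition lowers (F : fieldType) (V : vectType F) (d : nat)
    (X : 'End(V)) (Vs : nat -> {vspace V}) : Prop :=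
  (forall i, (1 <= i <= d)%N -> (X @: Vs i)%VS = Vs i.-1) /\
  (X @: Vs 0%N)%VS = 0%VS.

Definition raises (F : fieldType) (V : vectType F) (d : nat)
    (X : 'End(V)) (Vs : nat -> {vspace V}) : Prop :=
  (forall i, (i < d)%N -> (X @: Vs i)%VS = Vs i.+1) /\
  (X @: Vs d)%VS = 0%VS.

Definition LR_pair (F : fieldType) (V : vectType F) (d : nat)
    (A B : 'End(V)) : Prop :=
  exists Vs : nat -> {vspace V},
    decomposition d Vs /\ lowers d A Vs /\ raises d B Vs.

Definition antiautomorphism (F : fieldType) (V : vectType F)
    (s : 'End(V) -> 'End(V)) : Prop :=
  (forall (a : F) (X Y : 'End(V)), s (a *: X + Y) = a *: s X + s Y) /\
  bijective s /\
  (forall X Y : 'End(V), s (X \o Y)%VF = (s Y \o s X)%VF).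

From HB Require Import structures.
From mathcomp Require Import all_boot all_order all_algebra.
From mathcomp Require Import ring zify.
Set Implicit Arguments. Unset Strict Implicit. Unset Printing Implicit Defensive.
Import GRing.Theory.
Local Open Scope ring_scope.
Import passmx.

(* In the basis v_0, ..., v_d of V given by the LR pair, A v_i = v_(i-1) and
   B v_i = b_i v_(i+1) with every b_i nonzero.  Hence, for matrices acting on
   row vectors and D = diag g with g_i = b_0 ... b_(i-1), the matrix of B is
   D^-1 A^T D, and M |-> D^-1 M^T D transported to End(V) is an involutive
   antiautomorphism exchanging A and B.  It is the only one: A^(d-j) B^d A^i
   is g_d times the matrix unit E_ij, so A and B generate End(V) as an
   algebra. *)

Section LfunPower.
Variables (F : fieldType) (V : vectType F).

Definition pow_lfun (X : 'End(V)) k : 'End(V) := iter k (comp_lfun X) \1%VF.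

Lemma pow_lfunE X k x : pow_lfun X k x = iter k X x.
Proof. by elim: k => [|k IH] /=; rewrite ?id_lfunE // comp_lfunE IH. Qed.

Lemma iter_lfun0 (X : 'End(V)) k : iter k X 0 = 0.
Proof. by rewrite -pow_lfunE linear0. Qed.

Lemma pow_lfunC X k : (pow_lfun X k \o X = X \o pow_lfun X k)%VF.
Proof.
elim: k => [|k IH] /=; first by rewrite comp_lfun1l comp_lfun1r.
by rewrite -comp_lfunA IH.
Qed.

End LfunPower.

Section Antiautomorphism.
Variables (F : fieldType) (V : vectType F) (t u : 'End(V) -> 'End(V)).
Hypotheses (t_anti : antiautomorphism t) (u_anti : antiautomorphism u).

HB.instance Definition _ := GRing.isSemilinear.Build F _ _ _ t
  (GRing.semilinear_linear (proj1 t_anti)).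
HB.instance Definition _ := GRing.isSemilinear.Build F _ _ _ u
  (GRing.semilinear_linear (proj1 u_anti)).

Lemma anti_comp X Y : t (X \o Y)%VF = (t Y \o t X)%VF.
Proof. exact: (proj2 (proj2 t_anti)). Qed.

Lemma anti_id : t \1%VF = \1%VF.
Proof.
have [_ [[w _ twK] _]] := t_anti.
by rewrite -[RHS]twK -[w _]comp_lfun1r anti_comp twK comp_lfun1r.
Qed.

Lemma anti_pow X k : t (pow_lfun X k) = pow_lfun (t X) k.
Proof. by elim: k => [|k IH] /=; rewrite ?anti_id // anti_comp IH pow_lfunC. Qed.

Lemma eq_anti_on_span m n (c : 'I_m -> 'I_n -> F) (f : 'I_m -> 'I_n -> 'End(V)) :
    (forall i j, t (f i j) = u (f i j)) ->
  t (\sum_i \sum_j c i j *: f i j) = u (\sum_i \sum_j c i j *: f i j).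
Proof.
move=> tu; rewrite !linear_sum; apply: eq_bigr => i _.
by rewrite !linear_sum; apply: eq_bigr => j _; rewrite !linearZ /= tu.
Qed.

End Antiautomorphism.

Section WeightedTranspose.
Variables (F : fieldType) (n : nat) (g : 'I_n -> F).
Hypothesis g_neq0 : forall i, g i != 0.

(* [wtrmx M] is the matrix [D^-1 *m M^T *m D] with [D = diag g]. *)
Definition wtrmx (M : 'M[F]_n) : 'M[F]_n := \matrix_(i, j) (g j / g i * M j i).

Lemma wtrmx_is_linear : linear wtrmx.
Proof. by move=> k M N; apply/matrixP=> i j; rewrite !mxE; ring. Qed.

Lemma wtrmxK : involutive wtrmx.
Proof.
move=> M; apply/matrixP=> i j; rewrite !mxE.
by have gi := g_neq0 i; have gj := g_neq0 j; field; apply/andP.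
Qed.

Lemma wtrmxM M N : wtrmx (M *m N) = wtrmx N *m wtrmx M.
Proof.
apply/matrixP=> i j; rewrite !mxE mulr_sumr; apply: eq_bigr => k _; rewrite !mxE.
by have gi := g_neq0 i; have gk := g_neq0 k; field; apply/andP.
Qed.

End WeightedTranspose.

Section TransposeInBasis.
Variables (F : fieldType) (V : vectType F).
Local Notation n := (\dim {:V}).
Variables (e : n.-tuple V) (g : 'I_n -> F).
Hypotheses (e_basis : basis_of fullv e) (g_neq0 : forall i, g i != 0).

Lemma mxofE (X : 'End(V)) i j : mxof e e X i j = coord e j (X e`_i).
Proof. by rewrite !mxE /= vecof_delta. Qed.

Definition wtr_lfun (X : 'End(V)) : 'End(V) :=
  hommx e e (wtrmx g (mxof e e X)).

Lemma wtr_lfunK : involutive wtr_lfun.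
Proof.
move=> X; rewrite /wtr_lfun (hommxK e_basis e_basis) wtrmxK //.
exact: mxofK.
Qed.

Lemma antiautomorphism_wtr_lfun : antiautomorphism wtr_lfun.
Proof.
split; last split.
- by move=> a X Y; rewrite /wtr_lfun mxof_linear wtrmx_is_linear hommx_linear.
- exact: inv_bij wtr_lfunK.
- move=> X Y; rewrite /wtr_lfun (mxof_comp e e e_basis) wtrmxM //.
  exact: hommx_mul.
Qed.

End TransposeInBasis.

Lemma vline_eq0 (F : fieldType) (V : vectType F) (x : V) :
  (<[x]>%VS == 0%VS) = (x == 0).
Proof. by rewrite -dimv_eq0 dim_vline; case: (x =P 0). Qed.

Lemma dimv1_vline (F : fieldType) (V : vectType F) (U : {vspace V}) :
  \dim U = 1%N -> U = <[vpick U]>%VS.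
Proof.
move=> U1; apply/eqP; rewrite eq_sym eqEdim U1 dim_vline -memvE memv_pick /=.
by rewrite vpick0 -dimv_eq0 U1.
Qed.

Lemma vline_coordK (F : fieldType) (V : vectType F) (x y : V) :
  x \in <[y]>%VS -> coord [tuple y] 0 x *: y = x.
Proof.
by rewrite -span_seq1 => /coord_span {2}->; rewrite big_ord1.
Qed.

Section LRPair.
Variables (F : fieldType) (V : vectType F) (d : nat) (A B : 'End(V)).
Variable Vs : nat -> {vspace V}.
Hypotheses (Vs_dec : decomposition d Vs) (A_lowers : lowers d A Vs)
  (B_raises : raises d B Vs) (dimV : \dim {:V} = d.+1).

Definition lr_vec m : V := iter (d - m) A (vpick (Vs d)).

Lemma A_lr_vec m : (m < d)%N -> A (lr_vec m.+1) = lr_vec m.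
Proof. by move=> lt_md; rewrite /lr_vec -(subnSK lt_md). Qed.

Lemma Vs_line m : (m <= d)%N -> Vs m = <[lr_vec m]>%VS.
Proof.
move=> le_md; rewrite -(subKn le_md).
elim: (d - m)%N (leq_subr m d) => [|k IH] lt_kd.
  by rewrite subn0 /lr_vec subnn; apply/dimv1_vline/(proj1 Vs_dec).
rewrite -A_lr_vec subnSK ?leq_subr // -limg_line -(IH (ltnW lt_kd)).
by rewrite (proj1 A_lowers) ?subnS // subn_gt0 lt_kd leq_subr.
Qed.

Lemma lr_vec_neq0 m : (m <= d)%N -> lr_vec m != 0.
Proof.
move=> le_md; have := dim_vline (lr_vec m).
by rewrite -Vs_line // (proj1 Vs_dec); case: (lr_vec m =P 0).
Qed.

Lemma A_lr_vec0 : A (lr_vec 0) = 0.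
Proof. by apply/eqP; rewrite -vline_eq0 -limg_line -Vs_line // (proj2 A_lowers). Qed.

Lemma B_lr_vecd : B (lr_vec d) = 0.
Proof. by apply/eqP; rewrite -vline_eq0 -limg_line -Vs_line // (proj2 B_raises). Qed.

Lemma B_lr_vec_line m : (m < d)%N -> <[B (lr_vec m)]>%VS = <[lr_vec m.+1]>%VS.
Proof. by move=> lt_md; rewrite -limg_line -!Vs_line ?(proj1 B_raises) // ltnW. Qed.

Definition lr_coef m : F := coord [tuple lr_vec m.+1] 0 (B (lr_vec m)).

Lemma B_lr_vec m : (m < d)%N -> B (lr_vec m) = lr_coef m *: lr_vec m.+1.
Proof. by move=> lt_md; rewrite vline_coordK // memvE B_lr_vec_line. Qed.

Lemma lr_coef_neq0 m : (m < d)%N -> lr_coef m != 0.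
Proof.
move=> lt_md; apply: contraNneq (lr_vec_neq0 lt_md) => b0.
by rewrite -vline_eq0 -B_lr_vec_line // B_lr_vec // b0 scale0r vline_eq0.
Qed.

Lemma iter_A_lr_vec k m : (m <= d)%N ->
  iter k A (lr_vec m) = if (k <= m)%N then lr_vec (m - k) else 0.
Proof.
move=> le_md; elim: k => [|k IH]; first by rewrite subn0.
rewrite iterS IH; case: (ltngtP k m) => [lt_km|lt_mk|->].
- by rewrite -(subnSK lt_km) A_lr_vec //; lia.
- by rewrite linear0.
- by rewrite subnn A_lr_vec0.
Qed.

Lemma iter_B_lr_vec k m : (m + k <= d)%N ->
  iter k B (lr_vec m) = (\prod_(m <= l < m + k) lr_coef l) *: lr_vec (m + k).
Proof.
elim: k => [|k IH] le_mkd; first by rewrite addn0 big_geq // scale1r.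
rewrite addnS in le_mkd.
rewrite iterS (IH (ltnW le_mkd)) linearZ /= B_lr_vec // scalerA addnS.
by rewrite big_nat_recr //= leq_addr.
Qed.

Definition lr_gam k : F := \prod_(0 <= l < k) lr_coef l.

Lemma lr_gamS k : lr_gam k.+1 = lr_gam k * lr_coef k.
Proof. exact: big_nat_recr. Qed.

Lemma lr_gam_neq0 k : (k <= d)%N -> lr_gam k != 0.
Proof.
move=> le_kd; rewrite /lr_gam big_mkord; apply/prodf_neq0 => l _.
exact/lr_coef_neq0/(leq_trans (ltn_ord l)).
Qed.

Lemma iter_B_lr_vec_top m : (m <= d)%N ->
  iter d B (lr_vec m) = if m == 0%N then lr_gam d *: lr_vec d else 0.
Proof.
case: m => [|m] le_md; first by rewrite iter_B_lr_vec.
have -> : d = (m + (d - m.+1).+1)%N by rewrite subnSK // subnKC // ltnW.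
rewrite iterD iterS iter_B_lr_vec ?subnKC // linearZ /= B_lr_vecd scaler0.
exact: iter_lfun0.
Qed.

Local Notation n := (\dim {:V}).

Lemma ord_leq_d (i : 'I_n) : (i <= d)%N.
Proof. by rewrite -ltnS -dimV. Qed.

Lemma ltn_dimV k : (k <= d)%N -> (k < n)%N.
Proof. by rewrite dimV. Qed.

Definition lr_basis : n.-tuple V := [tuple lr_vec i | i < n].

Lemma lr_basisP : basis_of fullv lr_basis.
Proof.
rewrite basisEdim size_tuple leqnn andbT.
suff : (\sum_(i < d.+1) Vs i <= <<lr_basis>>)%VS by rewrite (proj2 (proj2 Vs_dec)).
apply/subv_sumP => i _; rewrite Vs_line -?memvE; last by rewrite -ltnS.
have lt_in : (i < n)%N by rewrite dimV.
by apply/memv_span/mapP; exists (Ordinal lt_in); rewrite ?mem_enum.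
Qed.

Lemma coord_lr_vec k (j : 'I_n) :
  (k < n)%N -> coord lr_basis j (lr_vec k) = (k == j)%:R.
Proof.
move=> lt_kn; have -> : lr_vec k = lr_basis`_(Ordinal lt_kn) by rewrite nth_mktuple.
exact/coord_free/basis_free/lr_basisP.
Qed.

Definition lr_weight (i : 'I_n) : F := lr_gam i.

Lemma lr_weight_neq0 i : lr_weight i != 0.
Proof. exact/lr_gam_neq0/ord_leq_d. Qed.

Lemma mxof_lrE (X : 'End(V)) (i j : 'I_n) :
  mxof lr_basis lr_basis X i j = coord lr_basis j (X (lr_vec i)).
Proof. by rewrite mxofE nth_mktuple. Qed.

Lemma coord_A_lr_vec (i j : 'I_n) :
  coord lr_basis i (A (lr_vec j)) = (j == i.+1 :> nat)%:R.
Proof.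
case: j => [[|j] lt_jn] /=; first by rewrite A_lr_vec0 linear0.
rewrite A_lr_vec; last by rewrite -ltnS -dimV.
by rewrite coord_lr_vec ?eqSS // ltnW.
Qed.

Lemma coord_B_lr_vec (i j : 'I_n) :
  coord lr_basis j (B (lr_vec i)) = lr_coef i * (i.+1 == j :> nat)%:R.
Proof.
have [lt_id | ge_id] := ltnP i d.
  by rewrite B_lr_vec // linearZ /= coord_lr_vec //; apply: ltn_dimV.
have -> : val i = d by apply/eqP; rewrite eqn_leq ord_leq_d.
by rewrite B_lr_vecd linear0 gtn_eqF ?mulr0 // ltnS ord_leq_d.
Qed.

Lemma wtrmx_mxof_A :
  wtrmx lr_weight (mxof lr_basis lr_basis A) = mxof lr_basis lr_basis B.
Proof.
apply/matrixP => i j; rewrite mxE !mxof_lrE coord_A_lr_vec coord_B_lr_vec.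
rewrite [(i.+1 == j)%N]eq_sym; case: eqP => [ji|_]; last by rewrite !mulr0.
rewrite /lr_weight ji lr_gamS !mulr1 mulrAC divff ?mul1r //.
exact: lr_weight_neq0.
Qed.

Definition lr_anti : 'End(V) -> 'End(V) := wtr_lfun lr_basis lr_weight.

Lemma antiautomorphism_lr_anti : antiautomorphism lr_anti.
Proof. exact/antiautomorphism_wtr_lfun/lr_weight_neq0/lr_basisP. Qed.

Lemma lr_antiK : involutive lr_anti.
Proof. exact/wtr_lfunK/lr_weight_neq0/lr_basisP. Qed.

Lemma lr_anti_A : lr_anti A = B.
Proof. by rewrite /lr_anti /wtr_lfun wtrmx_mxof_A mxofK //; apply: lr_basisP. Qed.

Definition lr_unit i j : 'End(V) :=
  (pow_lfun A (d - j) \o (pow_lfun B d \o pow_lfun A i))%VF.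

Lemma lr_unit_vec i j a : (a <= d)%N -> (j <= d)%N ->
  lr_unit i j (lr_vec a) = if a == i then lr_gam d *: lr_vec j else 0.
Proof.
move=> le_ad le_jd; rewrite /lr_unit !comp_lfunE !pow_lfunE iter_A_lr_vec //.
have [lt_ai | le_ia] := ltnP a i; first by rewrite ltn_eqF // !iter_lfun0.
rewrite iter_B_lr_vec_top; last exact: leq_trans (leq_subr i a) le_ad.
rewrite subn_eq0; have [-> | ne_ai] := eqVneq a i; last first.
  by rewrite leq_eqVlt (negPf ne_ai) ltnNge le_ia /= iter_lfun0.
by rewrite leqnn -pow_lfunE linearZ /= pow_lfunE iter_A_lr_vec ?leq_subr ?subKn.
Qed.

Lemma mxof_lr_unit (i j : 'I_n) :
  mxof lr_basis lr_basis (lr_unit i j) = lr_gam d *: delta_mx i j.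
Proof.
apply/matrixP => a c; rewrite mxof_lrE lr_unit_vec ?ord_leq_d // !mxE.
have [-> | ne_ai] := eqVneq a i; last first.
  by rewrite ifN ?linear0 ?mulr0 //; apply: contra_neq ne_ai; apply: ord_inj.
by rewrite !eqxx linearZ /= coord_lr_vec // eq_sym.
Qed.

Lemma lr_unit_expansion (X : 'End(V)) :
  X = \sum_i \sum_j (mxof lr_basis lr_basis X i j / lr_gam d) *: lr_unit i j.
Proof.
apply: (can_inj (mxofK lr_basisP lr_basisP)).
rewrite [LHS]matrix_sum_delta linear_sum; apply: eq_bigr => i _.
rewrite linear_sum; apply: eq_bigr => j _.
by rewrite linearZ /= mxof_lr_unit scalerA divfK ?lr_gam_neq0.
Qed.

Lemma eq_antiautomorphism_on_LR t u :
  antiautomorphism t -> antiautomorphism u -> t A = u A -> t B = u B -> t =1 u.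
Proof.
move=> t_anti u_anti tuA tuB X; rewrite (lr_unit_expansion X).
apply: eq_anti_on_span => // i j.
rewrite /lr_unit !(anti_comp t_anti) !(anti_comp u_anti).
by rewrite !(anti_pow t_anti) !(anti_pow u_anti) tuA tuB.
Qed.

End LRPair.

Theorem proposition6p1 (F : fieldType) (V : vectType F) (d : nat)
    (hdim : \dim {:V} = d.+1) (A B : 'End(V)) (hAB : LR_pair d A B) :
  exists s : 'End(V) -> 'End(V),
    [/\ antiautomorphism s, s A = B, s B = A,
        (forall t : 'End(V) -> 'End(V),
            antiautomorphism t -> t A = B -> t B = A -> forall X, t X = s X)
      & forall X : 'End(V), s (s X) = X].
Proof.
have [Vs [Vs_dec [A_lowers B_raises]]] := hAB.
have s_anti := antiautomorphism_lr_anti Vs_dec A_lowers B_raises hdim.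
have sK := lr_antiK Vs_dec A_lowers B_raises hdim.
have sA := lr_anti_A Vs_dec A_lowers B_raises hdim.
have sB : lr_anti d A B Vs B = A by rewrite -[X in lr_anti _ _ _ _ X]sA sK.
exists (lr_anti d A B Vs); split=> // t t_anti tA tB.
apply: (eq_antiautomorphism_on_LR Vs_dec A_lowers B_raises hdim t_anti s_anti).
- by rewrite tA sA.
- by rewrite tB sB.
Qed.
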